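(* Let $\lambda>0$. For every irrational $\alpha$, $\sigma^{\mathcal{H}}\setminus[-\lambda,\lambda]\neq\emptyset$.
   Context: $\mathbb{T}=\mathbb{R}/\mathbb{Z}$. For $\theta\in\mathbb{T}$, $n\in\mathbb{Z}$ put $v(\theta,n)=\cos2\pi((n-1)\alpha+\theta)$ if $n$ is odd and $v(\theta,n)=\cos 2\pi(n\alpha+\theta)$ if $n$ is even; $c(\theta,n)=\lambda$ if $n$ is odd and $c(\theta,n)=\cos2\pi(n\alpha+\theta)$ if $n$ is even. Let $\mathbb{T}_0=\{\theta:\cos 2\pi(n\alpha+\theta)\neq 0\ \forall n\}$ and for $\theta\in\mathbb{T}_0$ let $\mathcal{H}_\theta$ act on $\ell^2(\mathbb{Z})$ by $(\mathcal{H}_\theta u)(n)=c(\theta,n)u(n+1)+c(\theta,n-1)u(n-1)+v(\theta,n)u(n)$; $\sigma^{\mathcal{H}}$ denotes its spectrum, which is independent of $\theta$. *)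

From Stdlib Require Import Reals ZArith.
From Coquelicot Require Import Coquelicot.
Open Scope R_scope.

Definition irrational (a : R) : Prop :=
  forall (p q : Z), q <> 0%Z -> a * IZR q <> IZR p.

(* A point theta of T = R/Z is represented by a real; every quantity below
   depends on theta only modulo 1. *)
Definition v_pot (alpha theta : R) (n : Z) : R :=
  if Z.odd n then cos (2 * PI * (IZR (n - 1) * alpha + theta))
  else cos (2 * PI * (IZR n * alpha + theta)).

Definition c_hop (lam alpha theta : R) (n : Z) : R :=
  if Z.odd n then lam else cos (2 * PI * (IZR n * alpha + theta)).

Definition in_T0 (alpha theta : R) : Prop :=
  forall n : Z, cos (2 * PI * (IZR n * alpha + theta)) <> 0.

Definition Hop (lam alpha theta : R) (u : Z -> R) (n : Z) : R :=
  c_hop lam alpha theta n * u (n + 1)%Z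
  + c_hop lam alpha theta (n - 1)%Z * u (n - 1)%Z
  + v_pot alpha theta n * u n.

Definition l2Z (u : Z -> R) : Prop :=
  ex_series (fun k : nat => (u (Z.of_nat k)) ^ 2) /\
  ex_series (fun k : nat => (u (- Z.of_nat k)%Z) ^ 2).

(* E is in the spectrum of H_theta: H_theta - E is not a bijection of l^2(Z)
   onto itself (for a bounded operator this is equivalent to non-invertibility
   in B(l^2) by the bounded inverse theorem). *)
Definition in_spectrum (lam alpha theta E : R) : Prop :=
  ~ (forall f : Z -> R, l2Z f ->
       exists u : Z -> R, l2Z u /\
         (forall n, Hop lam alpha theta u n - E * u n = f n) /\
         (forall w : Z -> R, l2Z w ->
            (forall n, Hop lam alpha theta w n - E * w n = f n) ->
            forall n, w n = u n)).

From Stdlib Require Import Reals ZArith Lia Lra Classical ClassicalEpsilon.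
From Coquelicot Require Import Coquelicot.
Open Scope R_scope.

(* Write H = J(b, d) for the Jacobi operator with off-diagonal b = c(θ, .) and diagonal
   d = v(θ, .), and s J(b, d) = J(s b, s d) for a sign s.

   The sites 2k+1 and 2k+2 are joined by the hopping λ and carry the potentials
   v(2k+1) + v(2k+2) = 2 cos 2π((2k+1)α + θ) cos 2πα, so the vector (1, s) there has Rayleigh
   quotient λ + s (v(2k+1) + v(2k+2)) / 2 for s H.  As |cos y| + |cos (y + 4πα)| >= |sin 4πα|,
   for one sign s this quotient is >= λ + η/2, η = |sin 4πα cos 2πα| > 0, on pairs
   arbitrarily far to the right.

   Let M_N be the supremum of the Rayleigh quotients of s H over finitely supported vectors in
   [N, ∞) and E the limit of the nonincreasing M_N, so E >= λ + η/2.  If u nearly maximizes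
   the quotient on [N + 1, ∞) and M_N is close to E, then M_N - s H is a nonnegative form near
   the support of u, hence |(M_N - s H) u|^2 <= 6 B <(M_N - s H) u, u> is small, B bounding
   the coefficients.  So s H has a Weyl sequence at E escaping to +∞, and H has one at s E,
   where |s E| > λ.

   Gluing the Weyl vectors along the residues of their index mod 3 gives three functions u_i
   that are not square summable while (H - s E) u_i are.  If H - s E were onto ℓ², pick
   (H - s E) w_i = (H - s E) u_i in ℓ²; the u_i - w_i solve the homogeneous recurrence, whose
   solutions form a plane because c never vanishes on T_0, so some nontrivial combination of
   the u_i equals that of the w_i and is square summable, which it is not. *)

(* [wsum lo k f] sums the k + 1 values f lo, ..., f (lo + k). *)
Definition wsum (lo : Z) (k : nat) (f : Z -> R) : R :=
  sum_f_R0 (fun i => f (lo + Z.of_nat i)%Z) k.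

Lemma wsum_S lo k f : wsum lo (S k) f = wsum lo k f + f (lo + Z.of_nat (S k))%Z.
Proof. reflexivity. Qed.

Lemma wsum_Sl lo k f : wsum lo (S k) f = f lo + wsum (lo + 1) k f.
Proof.
  unfold wsum. rewrite decomp_sum by lia. simpl pred.
  rewrite Z.add_0_r. f_equal. apply sum_eq. intros i _. f_equal. lia.
Qed.

Lemma wsum_ext lo k f g :
  (forall n, (lo <= n <= lo + Z.of_nat k)%Z -> f n = g n) -> wsum lo k f = wsum lo k g.
Proof. intros H. apply sum_eq. intros i Hi. apply H. lia. Qed.

Lemma wsum_plus lo k f g :
  wsum lo k (fun n => f n + g n) = wsum lo k f + wsum lo k g.
Proof. apply plus_sum. Qed.

Lemma wsum_scal lo k a f : wsum lo k (fun n => a * f n) = a * wsum lo k f.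
Proof. unfold wsum. rewrite scal_sum. apply sum_eq. intros; ring. Qed.

Lemma wsum_minus lo k f g :
  wsum lo k (fun n => f n - g n) = wsum lo k f - wsum lo k g.
Proof. apply minus_sum. Qed.

Lemma wsum_le lo k f g :
  (forall n, (lo <= n <= lo + Z.of_nat k)%Z -> f n <= g n) -> wsum lo k f <= wsum lo k g.
Proof. intros H. apply sum_Rle. intros i Hi. apply H. lia. Qed.

Lemma wsum_zero lo k f :
  (forall n, (lo <= n <= lo + Z.of_nat k)%Z -> f n = 0) -> wsum lo k f = 0.
Proof.
  intros H. rewrite (wsum_ext _ _ f (fun _ => 0 * 0)) by (intros n Hn; rewrite H by exact Hn; ring).
  rewrite wsum_scal. ring.
Qed.

Lemma wsum_nonneg lo k f :
  (forall n, (lo <= n <= lo + Z.of_nat k)%Z -> 0 <= f n) -> 0 <= wsum lo k f.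
Proof.
  intros H. rewrite <- (wsum_zero lo k (fun _ => 0)) by auto. apply wsum_le, H.
Qed.

Lemma wsum_abs_le lo k f g :
  (forall n, (lo <= n <= lo + Z.of_nat k)%Z -> Rabs (f n) <= g n) ->
  Rabs (wsum lo k f) <= wsum lo k g.
Proof.
  intros H. apply Rabs_le. split.
  - replace (- wsum lo k g) with (wsum lo k (fun n => -1 * g n)) by (rewrite wsum_scal; ring).
    apply wsum_le. intros n Hn. specialize (H n Hn). apply Rabs_le_between in H. lra.
  - apply wsum_le. intros n Hn. specialize (H n Hn). apply Rabs_le_between in H. lra.
Qed.

Lemma wsum_split lo k1 k2 f :
  wsum lo (k1 + S k2) f = wsum lo k1 f + wsum (lo + Z.of_nat k1 + 1) k2 f.
Proof.
  induction k2 as [|k2 IH].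
  - rewrite Nat.add_1_r, wsum_S. unfold wsum at 3; simpl. do 2 f_equal. lia.
  - rewrite Nat.add_succ_r, wsum_S, IH, wsum_S. rewrite Rplus_assoc. do 3 f_equal. lia.
Qed.

Lemma wsum_mono_len lo k k' f :
  (k <= k')%nat -> (forall n, 0 <= f n) -> wsum lo k f <= wsum lo k' f.
Proof.
  intros H Hf. induction H as [|k' _ IH]; [lra|].
  rewrite wsum_S. specialize (Hf (lo + Z.of_nat (S k'))%Z). lra.
Qed.

Lemma wsum_split_at a c F : (0 <= a < c)%Z ->
  wsum 0 (Z.to_nat c) F = wsum 0 (Z.to_nat a) F + wsum (a + 1) (Z.to_nat (c - a - 1)) F.
Proof.
  intros H. replace (Z.to_nat c) with (Z.to_nat a + S (Z.to_nat (c - a - 1)))%nat by lia.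
  rewrite wsum_split. do 2 f_equal. lia.
Qed.

Lemma wsum_ext_right lo k m f :
  (forall n, (lo + Z.of_nat k < n <= lo + Z.of_nat (k + m))%Z -> f n = 0) ->
  wsum lo (k + m) f = wsum lo k f.
Proof.
  intros H. induction m as [|m IH].
  - rewrite Nat.add_0_r. reflexivity.
  - rewrite Nat.add_succ_r, wsum_S, IH, H; [ring|lia|]. intros; apply H; lia.
Qed.

Lemma wsum_widen lo k f : f (lo - 1)%Z = 0 -> f (lo + Z.of_nat k + 1)%Z = 0 ->
  wsum (lo - 1) (S (S k)) f = wsum lo k f.
Proof.
  intros H1 H2. rewrite wsum_Sl, wsum_S, H1. replace (lo - 1 + 1)%Z with lo by lia.
  replace (lo + Z.of_nat (S k))%Z with (lo + Z.of_nat k + 1)%Z by lia. rewrite H2. ring.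
Qed.

Lemma wsum_shift lo k c f : wsum lo k (fun n => f (n + c)%Z) = wsum (lo + c) k f.
Proof. apply sum_eq. intros i _. f_equal. lia. Qed.

Lemma wsum_telescope lo k g :
  wsum lo k (fun n => g n - g (n - 1)%Z) = g (lo + Z.of_nat k)%Z - g (lo - 1)%Z.
Proof.
  induction k as [|k IH].
  - unfold wsum; simpl. rewrite Z.add_0_r. reflexivity.
  - rewrite wsum_S, IH. replace (lo + Z.of_nat (S k) - 1)%Z with (lo + Z.of_nat k)%Z by lia.
    ring.
Qed.

Lemma wsum_shift_up_le lo k f : (forall n, 0 <= f n) -> f (lo + Z.of_nat k + 1)%Z = 0 ->
  wsum lo k (fun n => f (n + 1)%Z) <= wsum lo k f.
Proof.
  intros Hf Hk. rewrite wsum_shift.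
  assert (E := wsum_Sl lo k f). rewrite wsum_S in E.
  replace (lo + Z.of_nat (S k))%Z with (lo + Z.of_nat k + 1)%Z in E by lia.
  specialize (Hf lo). lra.
Qed.

Lemma wsum_shift_down_le lo k f : (forall n, 0 <= f n) -> f (lo - 1)%Z = 0 ->
  wsum lo k (fun n => f (n - 1)%Z) <= wsum lo k f.
Proof.
  intros Hf Hk. rewrite (wsum_shift lo k (-1)).
  assert (E := wsum_Sl (lo + -1) k f). rewrite wsum_S in E.
  replace (lo + -1 + 1)%Z with lo in E by lia. replace (lo + -1)%Z with (lo - 1)%Z in * by lia.
  rewrite Hk in E. specialize (Hf (lo - 1 + Z.of_nat (S k))%Z). lra.
Qed.

(** * Jacobi operators on finite windows *)

Definition dot (lo : Z) (k : nat) (u v : Z -> R) : R := wsum lo k (fun n => u n * v n).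

Definition supp_in (u : Z -> R) (a c : Z) : Prop := forall n, (n < a \/ c < n)%Z -> u n = 0.

Definition jacobi (b d u : Z -> R) (n : Z) : R :=
  b n * u (n + 1)%Z + b (n - 1)%Z * u (n - 1)%Z + d n * u n.

Definition resid (b d : Z -> R) (E : R) (u : Z -> R) (n : Z) : R := jacobi b d u n - E * u n.

Lemma dot_sq_nonneg lo k u : 0 <= dot lo k u u.
Proof. apply wsum_nonneg. intros. apply Rle_0_sqr. Qed.

Lemma dot_scal lo k c u : dot lo k (fun n => c * u n) (fun n => c * u n) = c * c * dot lo k u u.
Proof. unfold dot. rewrite <- wsum_scal. apply wsum_ext. intros; ring. Qed.

Lemma dot_resid_scal b d E lo k c u :
  dot lo k (resid b d E (fun n => c * u n)) (resid b d E (fun n => c * u n))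
  = c * c * dot lo k (resid b d E u) (resid b d E u).
Proof. rewrite <- dot_scal. apply wsum_ext. intros. unfold resid, jacobi. ring. Qed.

Lemma dot_sub_le lo k u v :
  dot lo k (fun n => u n - v n) (fun n => u n - v n) <= 2 * dot lo k u u + 2 * dot lo k v v.
Proof.
  unfold dot. rewrite <- !wsum_scal, <- wsum_plus. apply wsum_le. intros n _.
  pose proof (Rle_0_sqr (u n + v n)). unfold Rsqr in *. lra.
Qed.

Lemma supp_in_edges u a k :
  supp_in u a (a + Z.of_nat k) -> u (a - 1)%Z = 0 /\ u (a + Z.of_nat k + 1)%Z = 0.
Proof. intros H. split; apply H; lia. Qed.

(* Summation by parts; the boundary terms vanish. *)
Lemma dot_jacobi_sym b d lo k x y :
  x (lo - 1)%Z = 0 -> y (lo - 1)%Z = 0 ->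
  x (lo + Z.of_nat k + 1)%Z = 0 -> y (lo + Z.of_nat k + 1)%Z = 0 ->
  dot lo k (jacobi b d x) y = dot lo k x (jacobi b d y).
Proof.
  intros Hx1 Hy1 Hx2 Hy2.
  set (g := fun n => b n * (x (n + 1)%Z * y n - x n * y (n + 1)%Z)).
  assert (T := wsum_telescope lo k g).
  replace (g (lo + Z.of_nat k)%Z) with 0 in T by (unfold g; rewrite Hx2, Hy2; ring).
  replace (g (lo - 1)%Z) with 0 in T
    by (unfold g; replace (lo - 1 + 1)%Z with lo by lia; rewrite Hx1, Hy1; ring).
  assert (E : wsum lo k (fun n => g n - g (n - 1)%Z)
              = dot lo k (jacobi b d x) y - dot lo k x (jacobi b d y)).
  { unfold dot. rewrite <- wsum_minus. apply wsum_ext. intros n _.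
    unfold g, jacobi. replace (n - 1 + 1)%Z with n by lia. ring. }
  lra.
Qed.

Lemma abs_mul_le_sq c x y B : Rabs c <= B -> Rabs (c * x * y) <= B / 2 * (x * x + y * y).
Proof.
  intros Hc. rewrite Rmult_assoc, Rabs_mult.
  assert (Hxy : Rabs (x * y) <= (x * x + y * y) / 2).
  { pose proof (Rle_0_sqr (x - y)). pose proof (Rle_0_sqr (x + y)). unfold Rsqr in *.
    apply Rabs_le. lra. }
  pose proof (Rabs_pos c). pose proof (Rabs_pos (x * y)).
  apply Rle_trans with (B * ((x * x + y * y) / 2)); [apply Rmult_le_compat; lra | lra].
Qed.

Lemma dot_jacobi_bound b d B lo k x :
  (forall n, Rabs (b n) <= B) -> (forall n, Rabs (d n) <= B) ->
  x (lo - 1)%Z = 0 -> x (lo + Z.of_nat k + 1)%Z = 0 ->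
  Rabs (dot lo k (jacobi b d x) x) <= 3 * B * dot lo k x x.
Proof.
  intros Hb Hd H1 H2.
  set (q := fun n => x n * x n).
  assert (Hq : forall n, 0 <= q n) by (intros; apply Rle_0_sqr).
  eapply Rle_trans.
  { apply (wsum_abs_le _ _ _ (fun n => B / 2 * q (n + 1)%Z + B / 2 * q (n - 1)%Z + 2 * B * q n)).
    intros n _. unfold jacobi, q. rewrite !Rmult_plus_distr_r.
    pose proof (abs_mul_le_sq (b n) (x (n + 1)%Z) (x n) B (Hb n)).
    pose proof (abs_mul_le_sq (b (n - 1)%Z) (x (n - 1)%Z) (x n) B (Hb _)).
    pose proof (abs_mul_le_sq (d n) (x n) (x n) B (Hd n)).
    pose proof (Rabs_triang (b n * x (n + 1)%Z * x n + b (n - 1)%Z * x (n - 1)%Z * x n)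
                            (d n * x n * x n)).
    pose proof (Rabs_triang (b n * x (n + 1)%Z * x n) (b (n - 1)%Z * x (n - 1)%Z * x n)).
    lra. }
  rewrite !wsum_plus, !wsum_scal.
  pose proof (wsum_shift_up_le lo k q Hq ltac:(unfold q; rewrite H2; ring)).
  pose proof (wsum_shift_down_le lo k q Hq ltac:(unfold q; rewrite H1; ring)).
  assert (0 <= B) by (specialize (Hb lo); pose proof (Rabs_pos (b lo)); lra).
  fold (dot lo k x x) in *. unfold q in *. fold (dot lo k x x) in *. nra.
Qed.

(** * A Weyl sequence at the infimum of the tail suprema *)

Lemma lub_approx (P : R -> Prop) M δ : is_lub P M -> 0 < δ -> exists r, P r /\ M - δ < r.
Proof.
  intros [Hu Hl] Hδ. apply NNPP. intros H. assert (M <= M - δ); [|lra].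
  apply Hl. intros x Hx. apply Rnot_lt_le. intros Hlt. apply H. eauto.
Qed.

Definition weyl_at_infinity (b d : Z -> R) (E : R) : Prop :=
  forall N δ, 0 < δ -> exists lo k φ, (N <= lo)%Z /\ supp_in φ (lo + 1) (lo + Z.of_nat k - 1) /\
    dot lo k φ φ = 1 /\ dot lo k (resid b d E φ) (resid b d E φ) <= δ.

Section Variational.
Variables (b d : Z -> R) (B : R).
Hypothesis HB : 0 < B.
Hypothesis Hb : forall n, Rabs (b n) <= B.
Hypothesis Hd : forall n, Rabs (d n) <= B.

(* Expand the nonnegative form of M - J at u - (M - J) u / (6 B). *)
Lemma resid_sq_le_form M lo K u (y := fun n => M * u n - jacobi b d u n) :
  M <= 3 * B ->
  (forall z, supp_in z lo (lo + Z.of_nat K) -> dot lo K (jacobi b d z) z <= M * dot lo K z z) ->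
  supp_in u (lo + 1) (lo + Z.of_nat K - 1) ->
  dot lo K y y <= 6 * B * dot lo K y u.
Proof.
  intros HM Hpos Hu.
  assert (Hy : supp_in y lo (lo + Z.of_nat K)).
  { intros n Hn. unfold y, jacobi. rewrite !Hu by lia. ring. }
  destruct (supp_in_edges _ _ _ Hy) as [Hy1 Hy2].
  set (t := - / (6 * B)).
  set (z := fun n => u n + t * y n).
  assert (Hz : supp_in z lo (lo + Z.of_nat K)).
  { intros n Hn. unfold z. rewrite Hy, Hu by lia. ring. }
  assert (Hsym : dot lo K (jacobi b d y) u = dot lo K y (jacobi b d u)).
  { apply dot_jacobi_sym; auto; apply Hu; lia. }
  set (p := dot lo K y y).
  set (C := M * p - dot lo K (jacobi b d y) y).
  assert (Hexp : M * dot lo K z z - dot lo K (jacobi b d z) z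
                 = dot lo K y u + 2 * t * p + t * t * C
                   + t * (dot lo K y (jacobi b d u) - dot lo K (jacobi b d y) u)).
  { unfold C, p, dot.
    repeat first [rewrite <- wsum_scal | rewrite <- wsum_plus | rewrite <- wsum_minus].
    apply wsum_ext. intros n _. unfold z, y, jacobi. ring. }
  rewrite Hsym, Rminus_diag, Rmult_0_r, Rplus_0_r in Hexp.
  assert (Hp : 0 <= p) by apply dot_sq_nonneg.
  assert (HC : C <= 6 * B * p).
  { pose proof (dot_jacobi_bound b d B lo K y Hb Hd Hy1 Hy2) as Q.
    apply Rabs_le_between in Q. fold p in Q. unfold C. nra. }
  pose proof (Hpos z Hz).
  assert (T1 : t * t * C <= t * t * (6 * B * p)) by (apply Rmult_le_compat_l; [nra | exact HC]).
  assert (T2 : t * t * (6 * B * p) = p / (6 * B)) by (unfold t; field; lra).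
  assert (T3 : 2 * t * p = - (2 * (p / (6 * B)))) by (unfold t; field; lra).
  assert (p / (6 * B) <= dot lo K y u) by lra.
  replace p with (6 * B * (p / (6 * B))) by (field; lra).
  apply Rmult_le_compat_l; lra.
Qed.

Definition rayleigh_tail (N : Z) (r : R) : Prop :=
  exists lo k u, (N <= lo)%Z /\ supp_in u lo (lo + Z.of_nat k) /\ 0 < dot lo k u u /\
    dot lo k (jacobi b d u) u = r * dot lo k u u.

Lemma rayleigh_tail_le N r : rayleigh_tail N r -> r <= 3 * B.
Proof.
  intros (lo & k & u & _ & Hs & Hp & HQ).
  destruct (supp_in_edges _ _ _ Hs) as [E1 E2].
  pose proof (dot_jacobi_bound b d B lo k u Hb Hd E1 E2) as H. rewrite HQ in H.
  pose proof (Rle_abs (r * dot lo k u u)).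
  apply Rmult_le_reg_r with (dot lo k u u); lra.
Qed.

Lemma rayleigh_tail_mono N N' r : (N <= N')%Z -> rayleigh_tail N' r -> rayleigh_tail N r.
Proof. intros H (lo & k & u & Hlo & Hu). exists lo, k, u. split; [lia | exact Hu]. Qed.

Variable m : R.
Hypothesis Htest : forall N, exists r, m <= r /\ rayleigh_tail N r.

Lemma rayleigh_tail_bound N : bound (rayleigh_tail N).
Proof. exists (3 * B). intros r. apply rayleigh_tail_le. Qed.

Lemma rayleigh_tail_inhabited N : exists r, rayleigh_tail N r.
Proof. destruct (Htest N) as [r [_ Hr]]. eauto. Qed.

Definition tail_sup (N : Z) : R :=
  proj1_sig (completeness _ (rayleigh_tail_bound N) (rayleigh_tail_inhabited N)).

Lemma tail_sup_lub N : is_lub (rayleigh_tail N) (tail_sup N).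
Proof. unfold tail_sup. apply proj2_sig. Qed.

Lemma tail_sup_ge N : m <= tail_sup N.
Proof.
  destruct (Htest N) as [r [Hm Hr]]. pose proof (proj1 (tail_sup_lub N) r Hr). lra.
Qed.

Lemma tail_sup_le N : tail_sup N <= 3 * B.
Proof. apply (proj2 (tail_sup_lub N)). intros r. apply rayleigh_tail_le. Qed.

Lemma tail_sup_antitone N N' : (N <= N')%Z -> tail_sup N' <= tail_sup N.
Proof.
  intros H. apply (proj2 (tail_sup_lub N')). intros r Hr.
  apply (proj1 (tail_sup_lub N)). eapply rayleigh_tail_mono; eauto.
Qed.

Lemma form_le_tail_sup N lo K z : (N <= lo)%Z -> supp_in z lo (lo + Z.of_nat K) ->
  dot lo K (jacobi b d z) z <= tail_sup N * dot lo K z z.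
Proof.
  intros HN Hz. destruct (Rle_lt_or_eq_dec 0 _ (dot_sq_nonneg lo K z)) as [Hp | Hp].
  - set (r := dot lo K (jacobi b d z) z / dot lo K z z).
    assert (Hr : rayleigh_tail N r).
    { exists lo, K, z. repeat split; auto. unfold r. field. lra. }
    pose proof (proj1 (tail_sup_lub N) r Hr).
    replace (dot lo K (jacobi b d z) z) with (r * dot lo K z z) by (unfold r; field; lra).
    apply Rmult_le_compat_r; lra.
  - destruct (supp_in_edges _ _ _ Hz) as [E1 E2].
    pose proof (dot_jacobi_bound b d B lo K z Hb Hd E1 E2) as H.
    rewrite <- Hp in *. rewrite Rmult_0_r in *.
    pose proof (Rle_abs (dot lo K (jacobi b d z) z)). lra.
Qed.

Lemma tail_sup_opp_bound : bound (fun x => exists N, x = - tail_sup N).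
Proof. exists (- m). intros x [N ->]. pose proof (tail_sup_ge N). lra. Qed.

Lemma tail_sup_opp_inhabited : exists x, exists N, x = - tail_sup N.
Proof. exists (- tail_sup 0). exists 0%Z. reflexivity. Qed.

Definition tail_sup_inf : R :=
  - proj1_sig (completeness _ tail_sup_opp_bound tail_sup_opp_inhabited).

Lemma tail_sup_inf_opp_lub : is_lub (fun x => exists N, x = - tail_sup N) (- tail_sup_inf).
Proof. unfold tail_sup_inf. rewrite Ropp_involutive. apply proj2_sig. Qed.

Lemma tail_sup_inf_le N : tail_sup_inf <= tail_sup N.
Proof. pose proof (proj1 tail_sup_inf_opp_lub (- tail_sup N) (ex_intro _ N eq_refl)). lra. Qed.

Lemma tail_sup_inf_ge : m <= tail_sup_inf.
Proof.
  assert (- tail_sup_inf <= - m); [|lra].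
  apply (proj2 tail_sup_inf_opp_lub). intros x [N ->]. pose proof (tail_sup_ge N). lra.
Qed.

Lemma tail_sup_inf_approx δ : 0 < δ -> exists N, tail_sup N < tail_sup_inf + δ.
Proof.
  intros Hδ. destruct (lub_approx _ _ δ tail_sup_inf_opp_lub Hδ) as [x [[N ->] Hx]].
  exists N. lra.
Qed.

(* A near-maximizer u of the Rayleigh quotient on the tail N2 + 1, for an N2 whose tail
   supremum M is within δ of tail_sup_inf, has <(M - J)u, u> <= 2δ|u|^2; since M - J is
   nonnegative on the tail N2, this controls |(M - J)u|^2. *)
Lemma approx_eigvec_far N δ : 0 < δ <= 1 ->
  exists lo K u, (N <= lo)%Z /\ supp_in u (lo + 1) (lo + Z.of_nat K - 1) /\
    0 < dot lo K u u /\
    dot lo K (resid b d tail_sup_inf u) (resid b d tail_sup_inf u)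
      <= (24 * B + 2) * δ * dot lo K u u.
Proof.
  intros Hδ. set (E := tail_sup_inf).
  destruct (tail_sup_inf_approx δ (proj1 Hδ)) as [N1 HN1].
  set (N2 := Z.max N N1). set (M := tail_sup N2).
  assert (HM : E <= M < E + δ).
  { pose proof (tail_sup_inf_le N2). pose proof (tail_sup_antitone N1 N2 ltac:(lia)).
    unfold M, E. lra. }
  destruct (lub_approx _ _ δ (tail_sup_lub (N2 + 1)) (proj1 Hδ)) as [r [Hr Hrl]].
  pose proof (tail_sup_inf_le (N2 + 1)) as HE. fold E in HE.
  destruct Hr as (lo & k & u & Hlo & Hu & Hpos & HQ).
  destruct (supp_in_edges _ _ _ Hu) as [U1 U2].
  assert (Hsupp : supp_in u (lo - 1 + 1) (lo - 1 + Z.of_nat (S (S k)) - 1)).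
  { intros n Hn. apply Hu. lia. }
  set (n0 := dot lo k u u) in *.
  assert (Hn0 : dot (lo - 1) (S (S k)) u u = n0).
  { apply wsum_widen; rewrite ?U1, ?U2; ring. }
  assert (HQ' : dot (lo - 1) (S (S k)) (jacobi b d u) u = r * n0).
  { rewrite <- HQ. apply wsum_widen; rewrite ?U1, ?U2; ring. }
  set (y := fun n => M * u n - jacobi b d u n).
  assert (Hyu : dot (lo - 1) (S (S k)) y u = (M - r) * n0).
  { unfold dot, y. rewrite (wsum_ext _ _ _ (fun n => M * (u n * u n) - jacobi b d u n * u n))
      by (intros; ring).
    rewrite wsum_minus, wsum_scal. fold (dot (lo - 1) (S (S k)) u u).
    fold (dot (lo - 1) (S (S k)) (jacobi b d u) u). rewrite Hn0, HQ'. ring. }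
  assert (Hy : dot (lo - 1) (S (S k)) y y <= 6 * B * ((M - r) * n0)).
  { rewrite <- Hyu. apply resid_sq_le_form; [apply tail_sup_le | | exact Hsupp].
    intros z Hz. apply form_le_tail_sup; [lia | exact Hz]. }
  assert (Hres : dot (lo - 1) (S (S k)) (resid b d E u) (resid b d E u)
                 <= 2 * ((M - E) * (M - E) * n0) + 2 * dot (lo - 1) (S (S k)) y y).
  { rewrite <- Hn0, <- dot_scal. etransitivity; [|apply dot_sub_le].
    right. apply wsum_ext. intros n _. unfold resid, y. ring. }
  exists (lo - 1)%Z, (S (S k)), u. split; [lia|]. split; [exact Hsupp|].
  rewrite Hn0. split; [exact Hpos|].
  assert ((M - E) * (M - E) <= δ).
  { assert (0 <= M - E <= δ) by lra. nra. }
  assert (M - r <= 2 * δ) by lra.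
  assert (6 * B * ((M - r) * n0) <= 6 * B * (2 * δ * n0)).
  { apply Rmult_le_compat_l; [lra|]. apply Rmult_le_compat_r; lra. }
  nra.
Qed.

Lemma weyl_at_infinity_ge : exists E, m <= E /\ weyl_at_infinity b d E.
Proof.
  exists tail_sup_inf. split; [apply tail_sup_inf_ge|]. intros N δ Hδ.
  set (δ' := Rmin 1 (δ / (24 * B + 2))).
  assert (Hδ' : 0 < δ' <= 1).
  { split; [apply Rmin_pos; [lra | apply Rdiv_lt_0_compat; lra] | apply Rmin_l]. }
  assert (Hδδ' : (24 * B + 2) * δ' <= δ).
  { replace δ with ((24 * B + 2) * (δ / (24 * B + 2))) by (field; lra).
    apply Rmult_le_compat_l; [lra | apply Rmin_r]. }
  destruct (approx_eigvec_far N δ' Hδ') as (lo & K & u & HN & Hu & Hpos & Hres).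
  set (c := / sqrt (dot lo K u u)).
  assert (Hc : c * c * dot lo K u u = 1).
  { unfold c. pose proof (sqrt_lt_R0 _ Hpos).
    rewrite <- (sqrt_sqrt (dot lo K u u)) at 3 by lra. field. lra. }
  exists lo, K, (fun n => c * u n). split; [exact HN|]. split.
  { intros n Hn. rewrite Hu by exact Hn. ring. }
  rewrite dot_scal, Hc. split; [reflexivity|].
  rewrite dot_resid_scal.
  apply Rle_trans with (c * c * ((24 * B + 2) * δ' * dot lo K u u)).
  - apply Rmult_le_compat_l; [apply Rle_0_sqr | exact Hres].
  - replace (c * c * ((24 * B + 2) * δ' * dot lo K u u))
      with ((24 * B + 2) * δ' * (c * c * dot lo K u u)) by ring.
    rewrite Hc, Rmult_1_r. exact Hδδ'.
Qed.

End Variational.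

Lemma ex_series_of_sums_bounded (a : nat -> R) M :
  (forall n, 0 <= a n) -> (forall N, sum_f_R0 a N <= M) -> ex_series a.
Proof.
  intros Hp Hb.
  destruct (ex_finite_lim_seq_incr (sum_n a) M) as [l Hl].
  - intro n. rewrite !sum_n_Reals. simpl. specialize (Hp (S n)). lra.
  - intro n. rewrite sum_n_Reals. apply Hb.
  - exists l. exact Hl.
Qed.

Lemma sums_bounded_of_ex_series (a : nat -> R) :
  (forall n, 0 <= a n) -> ex_series a -> exists M, forall N, sum_f_R0 a N <= M.
Proof.
  intros Hp [l Hl]. exists l. intro N. rewrite <- sum_n_Reals.
  apply is_lim_seq_incr_compare; [exact Hl|].
  intro n. rewrite !sum_n_Reals. simpl. specialize (Hp (S n)). lra.
Qed.

Lemma sum_sq_wsum (f : Z -> R) N :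
  sum_f_R0 (fun k => f (Z.of_nat k) ^ 2) N = wsum 0 N (fun n => f n * f n).
Proof. apply sum_eq. intros i _. simpl. ring. Qed.

Lemma ex_series_mult_l (x : R) (a : nat -> R) : ex_series a -> ex_series (fun k => x * a k).
Proof. intros Ha. exact (ex_series_scal x a Ha). Qed.

Lemma ex_series_sq_plus (a c : nat -> R) :
  ex_series (fun k => a k ^ 2) -> ex_series (fun k => c k ^ 2) ->
  ex_series (fun k => (a k + c k) ^ 2).
Proof.
  intros Ha Hc.
  apply (@ex_series_le R_AbsRing R_CompleteNormedModule _ (fun k => 2 * a k ^ 2 + 2 * c k ^ 2)).
  - intro n. change (norm ((a n + c n) ^ 2)) with (Rabs ((a n + c n) ^ 2)).
    rewrite Rabs_right by (apply Rle_ge, pow2_ge_0).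
    pose proof (pow2_ge_0 (a n - c n)). nra.
  - apply (ex_series_plus (fun k => 2 * a k ^ 2) (fun k => 2 * c k ^ 2));
      apply ex_series_mult_l; assumption.
Qed.

Lemma ex_series_sq_scal (x : R) (a : nat -> R) :
  ex_series (fun k => a k ^ 2) -> ex_series (fun k => (x * a k) ^ 2).
Proof.
  intros Ha. refine (ex_series_ext _ _ _ (ex_series_mult_l (x ^ 2) _ Ha)).
  intro k. simpl. ring.
Qed.

Lemma l2Z_ext u w : (forall n, u n = w n) -> l2Z u -> l2Z w.
Proof.
  intros H [H1 H2]. split; [refine (ex_series_ext _ _ _ H1) | refine (ex_series_ext _ _ _ H2)];
    intro k; simpl; rewrite H; reflexivity.
Qed.

Lemma l2Z_plus u v : l2Z u -> l2Z v -> l2Z (fun n => u n + v n).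
Proof. intros [U1 U2] [V1 V2]. split; apply ex_series_sq_plus; assumption. Qed.

Lemma l2Z_scal x u : l2Z u -> l2Z (fun n => x * u n).
Proof. intros [U1 U2]. split; apply ex_series_sq_scal; assumption. Qed.

(** * Weyl sequences obstruct surjectivity *)

Lemma sq3_pos a b c : a <> 0 \/ b <> 0 \/ c <> 0 -> 0 < a * a + b * b + c * c.
Proof.
  intros H. pose proof (Rle_0_sqr a). pose proof (Rle_0_sqr b). pose proof (Rle_0_sqr c).
  destruct H as [H | [H | H]]; pose proof (Rsqr_pos_lt _ H); unfold Rsqr in *; lra.
Qed.

(* The cofactors give the dependence, unless they all vanish, in which case the vectors are
   proportional. *)
Lemma plane_three_dependent x0 y0 x1 y1 x2 y2 : exists β0 β1 β2,
  0 < β0 * β0 + β1 * β1 + β2 * β2 /\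
  β0 * x0 + β1 * x1 + β2 * x2 = 0 /\ β0 * y0 + β1 * y1 + β2 * y2 = 0.
Proof.
  destruct (classic (x1 * y2 - x2 * y1 <> 0 \/ x2 * y0 - x0 * y2 <> 0 \/ x0 * y1 - x1 * y0 <> 0))
    as [Hc | Hc].
  - exists (x1 * y2 - x2 * y1), (x2 * y0 - x0 * y2), (x0 * y1 - x1 * y0).
    split; [apply sq3_pos; exact Hc | split; ring].
  - assert (D : x0 * y1 - x1 * y0 = 0) by (apply NNPP; tauto).
    destruct (Req_dec x0 0) as [X0 | X0]; [destruct (Req_dec y0 0) as [Y0 | Y0]|].
    + exists 1, 0, 0. subst. repeat split; lra.
    + exists y1, (- y0), 0. split; [apply sq3_pos; right; left; lra|]. subst. split; nra.
    + exists x1, (- x0), 0. split; [apply sq3_pos; right; left; lra|]. split; nra.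
Qed.

Lemma jacobi_solution_zero b d E ψ : (forall n, b n <> 0) ->
  (forall n, resid b d E ψ n = 0) -> ψ 0%Z = 0 -> ψ 1%Z = 0 -> forall n, ψ n = 0.
Proof.
  intros Hb H H0 H1.
  assert (Up : forall k : nat, ψ (Z.of_nat k) = 0 /\ ψ (Z.of_nat k + 1)%Z = 0).
  { induction k as [|k [IH1 IH2]]; [split; auto|].
    rewrite Nat2Z.inj_succ, <- Z.add_1_r. split; [exact IH2|].
    specialize (H (Z.of_nat k + 1)%Z). unfold resid, jacobi in H.
    replace (Z.of_nat k + 1 - 1)%Z with (Z.of_nat k) in H by lia.
    rewrite IH1, IH2 in H.
    apply (Rmult_eq_reg_l (b (Z.of_nat k + 1)%Z)); [lra | apply Hb]. }
  assert (Down : forall k : nat, ψ (- Z.of_nat k)%Z = 0 /\ ψ (- Z.of_nat k + 1)%Z = 0).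
  { induction k as [|k [IH1 IH2]]; [split; auto|].
    replace (- Z.of_nat (S k) + 1)%Z with (- Z.of_nat k)%Z by lia. split; [|exact IH1].
    specialize (H (- Z.of_nat k)%Z). unfold resid, jacobi in H.
    replace (- Z.of_nat (S k))%Z with (- Z.of_nat k - 1)%Z by lia.
    rewrite IH1, IH2 in H.
    apply (Rmult_eq_reg_l (b (- Z.of_nat k - 1)%Z)); [lra | apply Hb]. }
  intro n. destruct (Z_le_gt_dec 0 n).
  - replace n with (Z.of_nat (Z.to_nat n)) by lia. apply Up.
  - replace n with (- Z.of_nat (Z.to_nat (- n)))%Z by lia. apply Down.
Qed.

Definition mod3_ind (i j : nat) : R := if Nat.eqb (j mod 3) i then 1 else 0.

Definition mod3_comb (β0 β1 β2 : R) (j : nat) : R :=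
  β0 * mod3_ind 0 j + β1 * mod3_ind 1 j + β2 * mod3_ind 2 j.

Lemma mod3_mod r m : (r < 3)%nat -> ((3 * m + r) mod 3 = r)%nat.
Proof.
  intros Hr. replace (3 * m + r)%nat with (r + m * 3)%nat by lia.
  rewrite Nat.Div0.mod_add. apply Nat.mod_small, Hr.
Qed.

Lemma sum_mod3_comb_sq β0 β1 β2 m :
  sum_f_R0 (fun j => mod3_comb β0 β1 β2 j ^ 2) (3 * m + 2)
  = INR (S m) * (β0 * β0 + β1 * β1 + β2 * β2).
Proof.
  assert (Hg : forall q r, (r < 3)%nat ->
            mod3_comb β0 β1 β2 (3 * q + r) = mod3_comb β0 β1 β2 r).
  { intros q r Hr. unfold mod3_comb, mod3_ind.
    rewrite mod3_mod, (Nat.mod_small r 3) by exact Hr. reflexivity. }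
  induction m as [|m IH].
  - unfold mod3_comb, mod3_ind. simpl. ring.
  - replace (3 * S m + 2)%nat with (S (S (S (3 * m + 2)))) by lia.
    rewrite !tech5, IH.
    replace (S (3 * m + 2)) with (3 * S m + 0)%nat by lia.
    replace (S (3 * S m + 0)) with (3 * S m + 1)%nat by lia.
    replace (S (3 * S m + 1)) with (3 * S m + 2)%nat by lia.
    rewrite !Hg by lia. rewrite (S_INR (S m)). unfold mod3_comb, mod3_ind. simpl. ring.
Qed.

Lemma sum_single (A : nat -> R) K j :
  (forall i, i <> j -> A i = 0) -> ((j <= K)%nat \/ A j = 0) -> sum_f_R0 A K = A j.
Proof.
  intros H Hj. induction K as [|K IH].
  - destruct j; [reflexivity|]. simpl. rewrite H by lia. destruct Hj; [lia | auto].
  - rewrite tech5. destruct (Nat.eq_dec j (S K)) as [-> | Hne].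
    + rewrite (sum_eq _ (fun _ => 0)) by (intros; apply H; lia). rewrite sum_cte. ring.
    + rewrite (H (S K)), IH by (lia || (destruct Hj; [left; lia | auto])). ring.
Qed.

Section WeylBlocks.
Variables (b d : Z -> R) (E : R).
Hypothesis Hweyl : weyl_at_infinity b d E.

Definition weyl_block (N : Z) (j : nat) (lo : Z) (k : nat) (φ : Z -> R) : Prop :=
  (N <= lo)%Z /\ supp_in φ (lo + 1) (lo + Z.of_nat k - 1) /\ dot lo k φ φ = 1 /\
  dot lo k (resid b d E φ) (resid b d E φ) <= (/ 2) ^ j.

Lemma weyl_block_exists N j :
  exists p : Z * nat * (Z -> R), weyl_block N j (fst (fst p)) (snd (fst p)) (snd p).
Proof.
  assert (Hj : 0 < (/ 2) ^ j) by (apply pow_lt; lra).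
  destruct (Hweyl N _ Hj) as (lo & k & φ & H).
  exists (lo, k, φ). exact H.
Qed.

Definition pick_block (N : Z) (j : nat) : Z * nat * (Z -> R) :=
  proj1_sig (constructive_indefinite_description _ (weyl_block_exists N j)).

Fixpoint block (j : nat) : Z * nat * (Z -> R) :=
  match j with
  | O => pick_block 1 0
  | S i => pick_block (fst (fst (block i)) + Z.of_nat (snd (fst (block i))) + 2) j
  end.

Definition blo (j : nat) : Z := fst (fst (block j)).
Definition blen (j : nat) : nat := snd (fst (block j)).
Definition bvec (j : nat) : Z -> R := snd (block j).

Definition block_start (j : nat) : Z :=
  match j with O => 1 | S i => blo i + Z.of_nat (blen i) + 2 end.

Lemma block_spec j : weyl_block (block_start j) j (blo j) (blen j) (bvec j).
Proof.
  unfold blo, blen, bvec. destruct j; simpl; unfold pick_block; apply proj2_sig.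
Qed.

Lemma blo_0 : (1 <= blo 0)%Z.
Proof. exact (proj1 (block_spec 0)). Qed.

Lemma blo_S j : (blo j + Z.of_nat (blen j) + 2 <= blo (S j))%Z.
Proof. exact (proj1 (block_spec (S j))). Qed.

Lemma blo_mono i j : (i <= j)%nat -> (blo i <= blo j)%Z.
Proof. intros H. induction H as [|j _ IH]; [lia|]. pose proof (blo_S j). lia. Qed.

Lemma blo_gt j : (Z.of_nat j < blo j)%Z.
Proof. induction j as [|j IH]; [pose proof blo_0; lia|]. pose proof (blo_S j). lia. Qed.

Lemma bvec_supp j : supp_in (bvec j) (blo j + 1) (blo j + Z.of_nat (blen j) - 1).
Proof. exact (proj1 (proj2 (block_spec j))). Qed.

Lemma bvec_norm j : dot (blo j) (blen j) (bvec j) (bvec j) = 1.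
Proof. exact (proj1 (proj2 (proj2 (block_spec j)))). Qed.

Lemma bvec_resid j :
  dot (blo j) (blen j) (resid b d E (bvec j)) (resid b d E (bvec j)) <= (/ 2) ^ j.
Proof. exact (proj2 (proj2 (proj2 (block_spec j)))). Qed.

Lemma bvec_nonzero j n : bvec j n <> 0 -> (blo j + 1 <= n <= blo j + Z.of_nat (blen j) - 1)%Z.
Proof.
  intros H. destruct (Z_lt_le_dec n (blo j + 1)); [exfalso; apply H, bvec_supp; lia|].
  destruct (Z_lt_le_dec (blo j + Z.of_nat (blen j) - 1) n); [exfalso; apply H, bvec_supp; lia|].
  lia.
Qed.

(* Since [j < blo j], [bvec i n] vanishes for [i >= n]: the truncation loses nothing. *)
Definition glue (ch : nat -> R) (n : Z) : R :=
  sum_f_R0 (fun i => ch i * bvec i n) (Z.to_nat n).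

Lemma glue_on_block ch j n : (blo j - 1 <= n <= blo (S j))%Z -> glue ch n = ch j * bvec j n.
Proof.
  intros Hn. apply (sum_single (fun i => ch i * bvec i n)).
  - intros i Hi. destruct (Req_dec (bvec i n) 0) as [-> | Hz]; [ring|]. exfalso.
    apply bvec_nonzero in Hz. destruct (Nat.lt_ge_cases i j) as [Hij | Hij].
    + pose proof (blo_mono (S i) j Hij). pose proof (blo_S i). lia.
    + pose proof (blo_mono (S j) i ltac:(lia)). lia.
  - destruct (Req_dec (bvec j n) 0) as [-> | Hz]; [right; ring|]. left.
    apply bvec_nonzero in Hz. pose proof (blo_gt j). lia.
Qed.

Lemma glue_before ch n : (n <= blo 0)%Z -> glue ch n = 0.
Proof.
  intros Hn. unfold glue. rewrite (sum_eq _ (fun _ => 0)), sum_cte; [ring|]. intros i _.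
  destruct (Req_dec (bvec i n) 0) as [-> | Hz]; [ring|]. exfalso.
  apply bvec_nonzero in Hz. pose proof (blo_mono 0 i ltac:(lia)). lia.
Qed.

Lemma resid_glue_on_block ch j n : (blo j <= n <= blo (S j) - 1)%Z ->
  resid b d E (glue ch) n = ch j * resid b d E (bvec j) n.
Proof. intros Hn. unfold resid, jacobi. rewrite !(glue_on_block ch j) by lia. ring. Qed.

Lemma resid_glue_before ch n : (n < blo 0)%Z -> resid b d E (glue ch) n = 0.
Proof. intros Hn. unfold resid, jacobi. rewrite !glue_before by lia. ring. Qed.

Definition region_sum (F : Z -> R) (j : nat) : R :=
  wsum (blo j) (Z.to_nat (blo (S j) - 1 - blo j)) F.

Lemma wsum_regions F J :
  wsum 0 (Z.to_nat (blo (S J) - 1)) F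
  = wsum 0 (Z.to_nat (blo 0 - 1)) F + sum_f_R0 (region_sum F) J.
Proof.
  induction J as [|J IH].
  - simpl. pose proof blo_0. pose proof (blo_S 0).
    rewrite (wsum_split_at (blo 0 - 1) (blo 1 - 1)) by lia.
    unfold region_sum. f_equal. f_equal; [lia | f_equal; lia].
  - rewrite tech5, <- Rplus_assoc, <- IH. pose proof blo_0. pose proof (blo_S (S J)).
    pose proof (blo_mono 0 (S J) ltac:(lia)).
    rewrite (wsum_split_at (blo (S J) - 1) (blo (S (S J)) - 1)) by lia.
    unfold region_sum. f_equal. f_equal; [lia | f_equal; lia].
Qed.

Lemma region_sum_block F G j :
  (forall n, (blo j <= n <= blo (S j) - 1)%Z -> F n = G n) ->
  (forall n, (blo j + Z.of_nat (blen j) < n)%Z -> G n = 0) ->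
  region_sum F j = wsum (blo j) (blen j) G.
Proof.
  intros H1 H2. pose proof (blo_S j). unfold region_sum.
  rewrite (wsum_ext _ _ F G) by (intros; apply H1; lia).
  replace (Z.to_nat (blo (S j) - 1 - blo j))
    with (blen j + (Z.to_nat (blo (S j) - 1 - blo j) - blen j))%nat by lia.
  apply wsum_ext_right. intros; apply H2; lia.
Qed.

Lemma region_sum_resid_glue ch j :
  region_sum (fun n => resid b d E (glue ch) n * resid b d E (glue ch) n) j
  = ch j * ch j * dot (blo j) (blen j) (resid b d E (bvec j)) (resid b d E (bvec j)).
Proof.
  rewrite (region_sum_block _
    (fun n => ch j * ch j * (resid b d E (bvec j) n * resid b d E (bvec j) n))).
  - unfold dot. apply wsum_scal.
  - intros n Hn. rewrite (resid_glue_on_block ch j n Hn). ring.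
  - intros n Hn. unfold resid, jacobi. rewrite !(bvec_supp j) by lia. ring.
Qed.

Lemma region_sum_glue ch j : region_sum (fun n => glue ch n * glue ch n) j = ch j * ch j.
Proof.
  rewrite (region_sum_block _ (fun n => ch j * ch j * (bvec j n * bvec j n))).
  - unfold dot. rewrite wsum_scal. fold (dot (blo j) (blen j) (bvec j) (bvec j)).
    rewrite bvec_norm. ring.
  - intros n Hn. rewrite (glue_on_block ch j) by lia. ring.
  - intros n Hn. rewrite (bvec_supp j) by lia. ring.
Qed.

Lemma resid_glue_l2 ch : (forall j, ch j * ch j <= 1) -> l2Z (resid b d E (glue ch)).
Proof.
  intros Hch. set (f := resid b d E (glue ch)). split.
  - apply ex_series_of_sums_bounded with 2; [intros; apply pow2_ge_0|]. intros N.
    rewrite sum_sq_wsum.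
    apply Rle_trans with (wsum 0 (Z.to_nat (blo (S N) - 1)) (fun n => f n * f n)).
    { apply wsum_mono_len; [pose proof (blo_gt (S N)); lia | intros; apply Rle_0_sqr]. }
    rewrite wsum_regions, wsum_zero, Rplus_0_l.
    2: { intros n Hn. pose proof blo_0. unfold f. rewrite resid_glue_before by lia. ring. }
    apply Rle_trans with (sum_f_R0 (fun j => (/ 2) ^ j) N).
    + apply sum_Rle. intros j _. unfold f. rewrite region_sum_resid_glue.
      pose proof (bvec_resid j). pose proof (dot_sq_nonneg (blo j) (blen j) (resid b d E (bvec j))).
      specialize (Hch j). pose proof (Rle_0_sqr (ch j)). unfold Rsqr in *. nra.
    + rewrite tech3 by lra. pose proof (pow_le (/ 2) (S N) ltac:(lra)). lra.
  - apply ex_series_of_sums_bounded with 0; [intros; apply pow2_ge_0|]. intros N.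
    rewrite (sum_eq _ (fun _ => 0)), sum_cte; [lra|]. intros i _.
    unfold f. rewrite resid_glue_before by (pose proof blo_0; lia). ring.
Qed.

Lemma glue_not_l2 ch : (forall M, exists J, M < sum_f_R0 (fun j => ch j * ch j) J) ->
  ~ ex_series (fun k => glue ch (Z.of_nat k) ^ 2).
Proof.
  intros Hunb Hser.
  destruct (sums_bounded_of_ex_series _ (fun _ => pow2_ge_0 _) Hser) as [M HM].
  destruct (Hunb M) as [J HJ].
  specialize (HM (Z.to_nat (blo (S J) - 1))).
  rewrite sum_sq_wsum, wsum_regions in HM.
  rewrite (sum_eq _ (fun j => ch j * ch j)) in HM by (intros; apply region_sum_glue).
  pose proof (wsum_nonneg 0 (Z.to_nat (blo 0 - 1)) (fun n => glue ch n * glue ch n)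
                (fun n _ => Rle_0_sqr _)).
  lra.
Qed.

Lemma glue_mod3_comb_not_l2 β0 β1 β2 : 0 < β0 * β0 + β1 * β1 + β2 * β2 ->
  ~ ex_series (fun k => glue (mod3_comb β0 β1 β2) (Z.of_nat k) ^ 2).
Proof.
  intros Hβ. apply glue_not_l2. intros M.
  destruct (INR_unbounded (M / (β0 * β0 + β1 * β1 + β2 * β2))) as [m Hm].
  exists (3 * m + 2)%nat.
  rewrite (sum_eq _ (fun j => mod3_comb β0 β1 β2 j ^ 2)) by (intros; simpl; ring).
  rewrite sum_mod3_comb_sq, S_INR.
  apply Rmult_gt_compat_r with (r := β0 * β0 + β1 * β1 + β2 * β2) in Hm; [|exact Hβ].
  unfold Rdiv in Hm. rewrite Rmult_assoc, Rinv_l in Hm by lra. lra.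
Qed.

Lemma glue_mod3_comb β0 β1 β2 n : glue (mod3_comb β0 β1 β2) n
  = β0 * glue (mod3_ind 0) n + β1 * glue (mod3_ind 1) n + β2 * glue (mod3_ind 2) n.
Proof.
  unfold glue, mod3_comb. rewrite !scal_sum, <- !plus_sum. apply sum_eq. intros; ring.
Qed.

(* The w_i solving (J - E) w_i = (J - E) (glue (mod3_ind i)) differ from glue (mod3_ind i) by
   solutions of the homogeneous recurrence, a plane; so some nontrivial combination of the
   glue (mod3_ind i) is square summable. *)
Theorem weyl_not_surjective : (forall n, b n <> 0) ->
  ~ (forall f, l2Z f -> exists u, l2Z u /\ forall n, resid b d E u n = f n).
Proof.
  intros Hb0 Hsurj.
  assert (Hsol : forall i, exists w, l2Z w /\
            forall n, resid b d E w n = resid b d E (glue (mod3_ind i)) n).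
  { intros i. apply Hsurj, resid_glue_l2. intros j. unfold mod3_ind. destruct (Nat.eqb _ _); lra. }
  destruct (Hsol 0%nat) as [w0 [W0 E0]], (Hsol 1%nat) as [w1 [W1 E1]],
    (Hsol 2%nat) as [w2 [W2 E2]].
  set (v0 := glue (mod3_ind 0)) in *. set (v1 := glue (mod3_ind 1)) in *.
  set (v2 := glue (mod3_ind 2)) in *.
  destruct (plane_three_dependent (v0 0%Z - w0 0%Z) (v0 1%Z - w0 1%Z) (v1 0%Z - w1 0%Z)
              (v1 1%Z - w1 1%Z) (v2 0%Z - w2 0%Z) (v2 1%Z - w2 1%Z))
    as (β0 & β1 & β2 & Hβ & Hx & Hy).
  set (ψ := fun n => β0 * (v0 n - w0 n) + β1 * (v1 n - w1 n) + β2 * (v2 n - w2 n)).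
  assert (Hψ : forall n, ψ n = 0).
  { apply (jacobi_solution_zero b d E); [exact Hb0 | | exact Hx | exact Hy].
    intros n.
    transitivity (β0 * (resid b d E v0 n - resid b d E w0 n)
                  + β1 * (resid b d E v1 n - resid b d E w1 n)
                  + β2 * (resid b d E v2 n - resid b d E w2 n)).
    { unfold resid, jacobi, ψ. ring. }
    rewrite E0, E1, E2. ring. }
  apply (glue_mod3_comb_not_l2 β0 β1 β2 Hβ).
  assert (HU : l2Z (fun n => β0 * w0 n + β1 * w1 n + β2 * w2 n)).
  { apply l2Z_plus; [apply l2Z_plus|]; apply l2Z_scal; assumption. }
  refine (proj1 (l2Z_ext _ _ _ HU)). intros n.
  rewrite glue_mod3_comb. specialize (Hψ n). unfold ψ in Hψ. fold v0 v1 v2. lra.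
Qed.

End WeylBlocks.

(** * The operator H *)

Lemma weyl_at_infinity_sign b d E s : s * s = 1 ->
  weyl_at_infinity (fun n => s * b n) (fun n => s * d n) E -> weyl_at_infinity b d (s * E).
Proof.
  intros Hs H N δ Hδ. destruct (H N δ Hδ) as (lo & k & φ & HN & Hsupp & Hnorm & Hres).
  exists lo, k, φ. repeat split; try assumption.
  eapply Rle_trans; [|exact Hres]. right.
  rewrite <- (Rmult_1_l (dot lo k _ _)), <- Hs, <- dot_scal.
  apply wsum_ext. intros n _.
  assert (P : s * resid b d (s * E) φ n = resid (fun n => s * b n) (fun n => s * d n) E φ n).
  { transitivity (s * jacobi b d φ n - (s * s) * E * φ n); [unfold resid; ring|].
    rewrite Hs. unfold resid, jacobi. ring. }
  rewrite P. reflexivity.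
Qed.

Lemma abs_sign_mul s x : (s = 1 \/ s = -1) -> Rabs (s * x) = Rabs x.
Proof. intros [-> | ->]; rewrite Rabs_mult; [rewrite Rabs_R1 | rewrite Rabs_m1]; ring. Qed.

Section AlmostMathieu.
Variables (lam alpha theta : R).

(* pot_even k = v(θ, 2k) = v(θ, 2k + 1) *)
Definition pot_even (k : Z) : R := cos (2 * PI * (IZR (2 * k) * alpha + theta)).

Definition eta : R := Rabs (sin (4 * PI * alpha)) * Rabs (cos (2 * PI * alpha)).

Lemma pot_even_pair k : pot_even k + pot_even (k + 1) =
  2 * cos (2 * PI * (IZR (2 * k + 1) * alpha + theta)) * cos (2 * PI * alpha).
Proof.
  unfold pot_even. set (y := 2 * PI * (IZR (2 * k + 1) * alpha + theta)).
  set (g := 2 * PI * alpha).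
  replace (2 * PI * (IZR (2 * k) * alpha + theta)) with (y - g)
    by (unfold y, g; rewrite ?plus_IZR, ?mult_IZR; ring).
  replace (2 * PI * (IZR (2 * (k + 1)) * alpha + theta)) with (y + g)
    by (unfold y, g; rewrite ?plus_IZR, ?mult_IZR, ?plus_IZR; ring).
  rewrite cos_minus, cos_plus. ring.
Qed.

Lemma abs_sin_le_cos y g : Rabs (sin (2 * g)) <= Rabs (cos y) + Rabs (cos (y + 2 * g)).
Proof.
  replace (2 * g) with ((y + 2 * g) - y) at 1 by ring.
  rewrite sin_minus. eapply Rle_trans; [apply Rabs_triang|]. rewrite Rabs_Ropp, !Rabs_mult.
  assert (Rabs (sin (y + 2 * g)) <= 1) by (apply Rabs_le, SIN_bound).
  assert (Rabs (sin y) <= 1) by (apply Rabs_le, SIN_bound).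
  pose proof (Rabs_pos (cos y)). pose proof (Rabs_pos (cos (y + 2 * g))).
  pose proof (Rabs_pos (sin y)). pose proof (Rabs_pos (sin (y + 2 * g))).
  nra.
Qed.

Lemma eta_pos : irrational alpha -> 0 < eta.
Proof.
  intros Hα.
  assert (S0 : sin (4 * PI * alpha) <> 0).
  { intros H. apply sin_eq_0_0 in H. destruct H as [z Hz].
    apply (Hα z 4%Z); [lia|]. pose proof PI_RGT_0.
    apply (Rmult_eq_reg_r PI); [|lra]. rewrite <- Hz. ring. }
  assert (C0 : cos (2 * PI * alpha) <> 0).
  { intros H. apply S0. replace (4 * PI * alpha) with (2 * (2 * PI * alpha)) by ring.
    rewrite sin_2a, H. ring. }
  apply Rmult_lt_0_compat; apply Rabs_pos_lt; assumption.
Qed.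

Lemma pot_even_pair_large k :
  Rabs (pot_even k + pot_even (k + 1)) >= eta \/
  Rabs (pot_even (k + 1) + pot_even (k + 1 + 1)) >= eta.
Proof.
  rewrite !pot_even_pair. set (y := 2 * PI * (IZR (2 * k + 1) * alpha + theta)).
  set (g := 2 * PI * alpha).
  replace (2 * PI * (IZR (2 * (k + 1) + 1) * alpha + theta)) with (y + 2 * g)
    by (unfold y, g; rewrite ?plus_IZR, ?mult_IZR, ?plus_IZR; ring).
  pose proof (abs_sin_le_cos y g) as H.
  replace (2 * g) with (4 * PI * alpha) in H at 1 by (unfold g; ring).
  unfold eta. fold g. rewrite !Rabs_mult, (Rabs_right 2) by lra.
  pose proof (Rabs_pos (cos g)).
  destruct (Rle_lt_dec (Rabs (sin (4 * PI * alpha)) / 2) (Rabs (cos y))).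
  - left. apply Rle_ge, Rmult_le_compat_r; lra.
  - right. apply Rle_ge, Rmult_le_compat_r; lra.
Qed.

Lemma pot_even_pair_sign_often : exists s, (s = 1 \/ s = -1) /\
  forall N, exists k, (N <= k)%Z /\ s * (pot_even k + pot_even (k + 1)) >= eta.
Proof.
  destruct (classic (forall N, exists k, (N <= k)%Z /\ pot_even k + pot_even (k + 1) >= eta))
    as [H | H].
  { exists 1. split; [left; reflexivity|]. intros N. destruct (H N) as [k [Hk Hk']].
    exists k. split; [exact Hk | lra]. }
  apply not_all_ex_not in H. destruct H as [N0 HN0].
  assert (Hneg : forall k, (N0 <= k)%Z -> Rabs (pot_even k + pot_even (k + 1)) >= eta ->
                   -1 * (pot_even k + pot_even (k + 1)) >= eta).
  { intros k Hk Habs. destruct (Rcase_abs (pot_even k + pot_even (k + 1))) as [Hl | Hr].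
    - rewrite Rabs_left in Habs by exact Hl. lra.
    - exfalso. rewrite Rabs_right in Habs by exact Hr. apply HN0. eauto. }
  exists (-1). split; [right; reflexivity|]. intros N.
  destruct (pot_even_pair_large (Z.max N N0)) as [G | G].
  - exists (Z.max N N0). split; [lia | apply Hneg; [lia | exact G]].
  - exists (Z.max N N0 + 1)%Z. split; [lia | apply Hneg; [lia | exact G]].
Qed.

Lemma rayleigh_tail_pair s k N : (s = 1 \/ s = -1) -> (N <= 2 * k + 1)%Z ->
  rayleigh_tail (fun n => s * c_hop lam alpha theta n) (fun n => s * v_pot alpha theta n) N
    (lam + s * (pot_even k + pot_even (k + 1)) / 2).
Proof.
  intros Hs HN. assert (Hs2 : s * s = 1) by (destruct Hs as [-> | ->]; ring).
  set (u := fun n => if Z.eq_dec n (2 * k + 1) then 1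
                     else if Z.eq_dec n (2 * k + 2) then s else 0).
  assert (U1 : u (2 * k + 1)%Z = 1) by (unfold u; destruct (Z.eq_dec _ _); [reflexivity | lia]).
  assert (U2 : u (2 * k + 2)%Z = s).
  { unfold u. destruct (Z.eq_dec _ _); [lia|]. destruct (Z.eq_dec _ _); [reflexivity | lia]. }
  assert (U0 : forall n, n <> (2 * k + 1)%Z -> n <> (2 * k + 2)%Z -> u n = 0).
  { intros n H1 H2. unfold u.
    destruct (Z.eq_dec _ _); [lia|]. destruct (Z.eq_dec _ _); [lia | reflexivity]. }
  assert (W : forall f, wsum (2 * k + 1) 1 f = f (2 * k + 1)%Z + f (2 * k + 2)%Z).
  { intros f. unfold wsum. simpl. f_equal; f_equal; lia. }
  assert (J1 : jacobi (fun n => s * c_hop lam alpha theta n) (fun n => s * v_pot alpha theta n) u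
                 (2 * k + 1)%Z = s * (lam * s + pot_even k)).
  { unfold jacobi. replace (2 * k + 1 + 1)%Z with (2 * k + 2)%Z by lia.
    rewrite U1, U2, (U0 (2 * k + 1 - 1)%Z) by lia.
    unfold c_hop, v_pot. rewrite Z.odd_odd. replace (2 * k + 1 - 1)%Z with (2 * k)%Z by lia.
    unfold pot_even. ring. }
  assert (J2 : jacobi (fun n => s * c_hop lam alpha theta n) (fun n => s * v_pot alpha theta n) u
                 (2 * k + 2)%Z = s * (lam + pot_even (k + 1) * s)).
  { unfold jacobi. replace (2 * k + 2 - 1)%Z with (2 * k + 1)%Z by lia.
    rewrite U1, U2, (U0 (2 * k + 2 + 1)%Z) by lia.
    unfold c_hop, v_pot. rewrite Z.odd_odd. replace (2 * k + 2)%Z with (2 * (k + 1))%Z by lia.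
    rewrite Z.odd_even. unfold pot_even. ring. }
  exists (2 * k + 1)%Z, 1%nat, u. split; [exact HN|]. split.
  { intros n Hn. apply U0; lia. }
  unfold dot. rewrite !W, J1, J2, U1, U2, Hs2. split; [lra|].
  transitivity ((s * s) * (2 * lam) + s * (pot_even k + pot_even (k + 1))
                + (s * s - 1) * (s * pot_even (k + 1))); [ring|].
  rewrite Hs2. field.
Qed.

Lemma c_hop_abs_le n : 0 < lam -> Rabs (c_hop lam alpha theta n) <= lam + 1.
Proof.
  intros Hlam. unfold c_hop. destruct (Z.odd n).
  - rewrite Rabs_right; lra.
  - pose proof (COS_bound (2 * PI * (IZR n * alpha + theta))). apply Rabs_le. lra.
Qed.

Lemma v_pot_abs_le n : Rabs (v_pot alpha theta n) <= 1.
Proof.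
  unfold v_pot. destruct (Z.odd n); apply Rabs_le, COS_bound.
Qed.

Lemma c_hop_neq0 n : 0 < lam -> in_T0 alpha theta -> c_hop lam alpha theta n <> 0.
Proof. intros Hlam Hθ. unfold c_hop. destruct (Z.odd n); [lra | apply Hθ]. Qed.

Lemma signed_rayleigh_tail_often : exists s, (s = 1 \/ s = -1) /\
  forall N, exists r, lam + eta / 2 <= r /\
    rayleigh_tail (fun n => s * c_hop lam alpha theta n) (fun n => s * v_pot alpha theta n) N r.
Proof.
  destruct pot_even_pair_sign_often as [s [Hs Hoften]]. exists s. split; [exact Hs|].
  intros N. destruct (Hoften (Z.abs N)) as [k [Hk Hk']].
  exists (lam + s * (pot_even k + pot_even (k + 1)) / 2).
  split; [lra | apply rayleigh_tail_pair; [exact Hs | lia]].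
Qed.

End AlmostMathieu.

Theorem lemma3p3 (lam : R) (hlam : 0 < lam) (alpha : R) (halpha : irrational alpha)
  (theta : R) (htheta : in_T0 alpha theta) :
  exists E : R, in_spectrum lam alpha theta E /\ ~ (-lam <= E <= lam).
Proof.
  destruct (signed_rayleigh_tail_often lam alpha theta) as [s [Hs Htest]].
  pose proof (eta_pos alpha halpha) as Heta.
  assert (Hb : forall n, Rabs (s * c_hop lam alpha theta n) <= lam + 1).
  { intros n. rewrite abs_sign_mul by exact Hs. apply c_hop_abs_le, hlam. }
  assert (Hd : forall n, Rabs (s * v_pot alpha theta n) <= lam + 1).
  { intros n. rewrite abs_sign_mul by exact Hs. pose proof (v_pot_abs_le alpha theta n). lra. }
  destruct (weyl_at_infinity_ge _ _ (lam + 1) ltac:(lra) Hb Hd _ Htest) as [E [HE Hweyl]].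
  exists (s * E). split.
  - intros Hbij.
    apply (weyl_not_surjective (c_hop lam alpha theta) (v_pot alpha theta) (s * E)).
    + apply weyl_at_infinity_sign; [destruct Hs as [-> | ->]; ring | exact Hweyl].
    + intros n. apply c_hop_neq0; assumption.
    + intros f Hf. destruct (Hbij f Hf) as [u [Hu [Hsol _]]]. exists u. split; assumption.
  - destruct Hs as [-> | ->]; lra.
Qed.
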